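(* Let $\mathcal H$ be a finite-dimensional complex Hilbert space, $\rho$ a density operator on $\mathcal H$, $V,W$ unitary operators on $\mathcal H$, and $|\phi\rangle$ any unit vector. Let $F=\operatorname{Tr}(W^{\dagger}V^{\dagger}WV\rho)$, and define $\theta_{VW}^{\phi}=\arccos\big\|\sqrt\rho\,(VW)^{\dagger}|\phi\rangle\big\|$ and $\theta_{WV}^{\phi}=\arccos\big\|\sqrt\rho\,(WV)^{\dagger}|\phi\rangle\big\|$ (the norms lie in $[0,1]$). Then $$|F|\le\cos\big(\theta^{\phi}_{VW}-\theta^{\phi}_{WV}\big).$$
   Context: $\|\cdot\|$ is the vector norm on $\mathcal H$; $\sqrt\rho$ is the positive square root of $\rho$. *)

From HB Require Import structures.
From mathcomp Require Import all_boot all_order all_algebra.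
From mathcomp Require Import complex.
From mathcomp Require Import reals trigo.
Set Implicit Arguments. Unset Strict Implicit. Unset Printing Implicit Defensive.
Import Order.TTheory GRing.Theory Num.Theory.
Local Open Scope ring_scope.

Section Defs.
Variable R : realType.
Local Notation C := (complex R).

Definition cmod (z : C) : R := Num.sqrt (complex.Re z ^+ 2 + complex.Im z ^+ 2).

Definition cconj (z : C) : C := Complex (complex.Re z) (- complex.Im z).

Definition adj m n (A : 'M[C]_(m, n)) : 'M[C]_(n, m) := (map_mx cconj A)^T.

Definition vnorm n (v : 'cV[C]_n) : R := Num.sqrt (\sum_i cmod (v i 0) ^+ 2).

Definition hermitian n (A : 'M[C]_n) : Prop := adj A = A.

Definition psd n (A : 'M[C]_n) : Prop :=
  hermitian A /\ forall x : 'cV[C]_n, complex.Im ((adj x *m A *m x) 0 0) = 0 /\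
                                      0 <= complex.Re ((adj x *m A *m x) 0 0).

Definition density n (rho : 'M[C]_n) : Prop := psd rho /\ \tr rho = 1.

Definition unitary n (U : 'M[C]_n) : Prop :=
  adj U *m U = 1%:M /\ U *m adj U = 1%:M.

Definition is_psd_sqrt n (S A : 'M[C]_n) : Prop := psd S /\ S *m S = A.
End Defs.

(* With X = V W sqrt(rho) and Y = W V sqrt(rho), F is the Hilbert-Schmidt inner
   product <X, Y> = tr (X^* Y), and <X, X> = <Y, Y> = tr rho = 1.  Split it along the
   rank-one projector P = |phi><phi| and its complement: <P X, P X> = |X^* phi|^2 is
   cos^2 of theta_VW, so <(1 - P) X, (1 - P) X> is its sin^2, and likewise for Y.
   Cauchy-Schwarz on each of the two parts then bounds |F| by
   cos theta_VW cos theta_WV + sin theta_VW sin theta_WV = cos (theta_VW - theta_WV). *)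

From HB Require Import structures.
From mathcomp Require Import all_boot all_order all_algebra.
From mathcomp Require Import complex.
From mathcomp Require Import reals trigo.
From mathcomp Require Import sesquilinear spectral.
Import Order.TTheory GRing.Theory Num.Theory.
Set Implicit Arguments. Unset Strict Implicit. Unset Printing Implicit Defensive.
Local Open Scope ring_scope.

Section HilbertSchmidt.
Variable R : realType.
Local Notation C := (complex R).

Lemma cconjE (z : C) : cconj z = z^*.
Proof. by case: z. Qed.

Lemma normc_cmod (z : C) : `|z| = (cmod z)%:C%C.
Proof. exact: normc_def. Qed.

Lemma adjE m n (A : 'M[C]_(m, n)) : adj A = (map_mx Num.conj A)^T.
Proof. by congr (_^T); apply/matrixP => i j; rewrite !mxE cconjE. Qed.

Lemma adjM m n p (A : 'M[C]_(m, n)) (B : 'M[C]_(n, p)) :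
  adj (A *m B) = adj B *m adj A.
Proof. by rewrite !adjE map_mxM trmx_mul. Qed.

Lemma adjK m n (A : 'M[C]_(m, n)) : adj (adj A) = A.
Proof. by apply/matrixP => i j; rewrite !adjE !mxE conjCK. Qed.

Lemma adjB m n (A B : 'M[C]_(m, n)) : adj (A - B) = adj A - adj B.
Proof. by apply/matrixP => i j; rewrite !adjE !mxE rmorphB. Qed.

Lemma adj1 n : adj (1%:M : 'M[C]_n) = 1%:M.
Proof. by apply/matrixP => i j; rewrite !adjE !mxE conjC_nat eq_sym. Qed.

Lemma vnorm_sqr n (v : 'cV[C]_n) : ((vnorm v ^+ 2)%:C)%C = (adj v *m v) 0 0.
Proof.
rewrite /vnorm sqr_sqrtr; last by apply: sumr_ge0 => i _; rewrite sqr_ge0.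
rewrite rmorph_sum !mxE; apply: eq_bigr => i _.
by rewrite adjE !mxE -normCKC normc_def rmorphXn.
Qed.

Definition hs_dot m n (X Y : 'M[C]_(m, n)) : C := \tr (adj X *m Y).

(* Flattening by [mxvec] identifies [hs_dot] with the library dot product [dotmx],
   so its Cauchy-Schwarz inequality applies. *)
Lemma hs_dotE m n (X Y : 'M[C]_(m, n)) : hs_dot X Y = dotmx (mxvec Y) (mxvec X).
Proof.
rewrite dotmxE !mxE (reindex _ (curry_mxvec_bij _ _)) /= /hs_dot /mxtrace.
under [LHS]eq_bigr do rewrite mxE.
rewrite exchange_big pair_bigA; apply: eq_bigr => -[i j] _ /=.
by rewrite adjE !mxE !mxvecE mulrC.
Qed.

Lemma hs_dot_ge0 m n (X : 'M[C]_(m, n)) : 0 <= hs_dot X X.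
Proof. by rewrite hs_dotE dnorm_ge0. Qed.

Lemma hs_dot_CauchySchwarz m n (X Y : 'M[C]_(m, n)) :
  `|hs_dot X Y| ^+ 2 <= hs_dot X X * hs_dot Y Y.
Proof. by rewrite !hs_dotE mulrC; apply: (CauchySchwarz (@dotmx C _)). Qed.

Lemma hs_dot_le m n (X Y : 'M[C]_(m, n)) (s t : R) : 0 <= s -> 0 <= t ->
  hs_dot X X = (s ^+ 2)%:C%C -> hs_dot Y Y = (t ^+ 2)%:C%C ->
  `|hs_dot X Y| <= (s * t)%:C%C.
Proof.
move=> s0 t0 hX hY.
rewrite -(ler_pXn2r (_ : 0 < 2)%N) ?nnegrE ?normr_ge0 ?ler0c ?mulr_ge0 //.
apply: le_trans (hs_dot_CauchySchwarz X Y) _.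
by rewrite hX hY -rmorphM -exprMn rmorphXn.
Qed.

Lemma isometryM m n p (U : 'M[C]_(m, n)) (U' : 'M[C]_(n, p)) :
  adj U *m U = 1%:M -> adj U' *m U' = 1%:M -> adj (U *m U') *m (U *m U') = 1%:M.
Proof. by move=> UU UU'; rewrite adjM -mulmxA (mulmxA (adj U)) UU mul1mx. Qed.

Lemma vnorm_eq1 n (v : 'cV[C]_n) : vnorm v = 1 -> adj v *m v = 1%:M.
Proof.
move=> v1; rewrite [LHS]mx11_scalar -vnorm_sqr v1 expr1n.
by apply/matrixP => i j; rewrite !mxE.
Qed.

Lemma hs_dot_isometry m n p (U : 'M[C]_(m, n)) (X Y : 'M[C]_(n, p)) :
  adj U *m U = 1%:M -> hs_dot (U *m X) (U *m Y) = hs_dot X Y.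
Proof. by move=> UU; rewrite /hs_dot adjM -mulmxA (mulmxA (adj U)) UU mul1mx. Qed.

Definition orthoproj n (P : 'M[C]_n) := adj P = P /\ P *m P = P.

Lemma orthoproj_compl n (P : 'M[C]_n) : orthoproj P -> orthoproj (1%:M - P).
Proof.
move=> [P_adj P_idem]; split; first by rewrite adjB adj1 P_adj.
by rewrite mulmxBl mul1mx mulmxBr mulmx1 P_idem subrr subr0.
Qed.

Lemma orthoproj_rank1 n (phi : 'cV[C]_n) :
  adj phi *m phi = 1%:M -> orthoproj (phi *m adj phi).
Proof.
move=> phi1; split; first by rewrite adjM adjK.
by rewrite -mulmxA (mulmxA (adj phi)) phi1 mul1mx.
Qed.

Lemma hs_dot_orthoproj n p (P : 'M[C]_n) (X Y : 'M[C]_(n, p)) :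
  orthoproj P -> hs_dot (P *m X) (P *m Y) = \tr (adj X *m P *m Y).
Proof.
by move=> [P_adj P_idem]; rewrite /hs_dot adjM P_adj -mulmxA (mulmxA P) P_idem mulmxA.
Qed.

Lemma hs_dot_orthoproj_split n p (P : 'M[C]_n) (X Y : 'M[C]_(n, p)) :
  orthoproj P ->
  hs_dot X Y = hs_dot (P *m X) (P *m Y) + hs_dot ((1%:M - P) *m X) ((1%:M - P) *m Y).
Proof.
move=> hP; have hQ := orthoproj_compl hP.
by rewrite !hs_dot_orthoproj // -mxtraceD -mulmxDl -mulmxDr addrC subrK mulmx1.
Qed.

Lemma hs_dot_orthoproj_le n p (P : 'M[C]_n) (X : 'M[C]_(n, p)) :
  orthoproj P -> hs_dot (P *m X) (P *m X) <= hs_dot X X.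
Proof. by move=> /(hs_dot_orthoproj_split X X)->; rewrite lerDl hs_dot_ge0. Qed.

Lemma hs_dot_orthoproj_split_le n p (P : 'M[C]_n) (X Y : 'M[C]_(n, p)) (a b : R) :
  orthoproj P -> hs_dot X X = 1 -> hs_dot Y Y = 1 ->
  hs_dot (P *m X) (P *m X) = (a ^+ 2)%:C%C ->
  hs_dot (P *m Y) (P *m Y) = (b ^+ 2)%:C%C ->
  0 <= a -> 0 <= b ->
  cmod (hs_dot X Y) <= a * b + Num.sqrt (1 - a ^+ 2) * Num.sqrt (1 - b ^+ 2).
Proof.
move=> hP X1 Y1 hPX hPY a0 b0; rewrite -lecR -normc_cmod.
have hQ (Z : 'M[C]_(n, p)) c : hs_dot Z Z = 1 ->
    hs_dot (P *m Z) (P *m Z) = (c ^+ 2)%:C%C ->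
    hs_dot ((1%:M - P) *m Z) ((1%:M - P) *m Z) = (Num.sqrt (1 - c ^+ 2) ^+ 2)%:C%C.
  move=> Z1 hPZ; have := hs_dot_orthoproj_split Z Z hP.
  rewrite Z1 hPZ => /esym/(canRL (addKr _)) hQZ.
  have eQ : hs_dot ((1%:M - P) *m Z) ((1%:M - P) *m Z) = (1 - c ^+ 2)%:C%C.
    by rewrite rmorphB rmorph1 hQZ addrC.
  by rewrite sqr_sqrtr // -ler0c -eQ hs_dot_ge0.
rewrite (hs_dot_orthoproj_split X Y hP) rmorphD; apply: le_trans (ler_normD _ _) _.
by apply: lerD; apply: hs_dot_le; rewrite ?sqrtr_ge0 //; apply: hQ.
Qed.

Lemma hs_dot_rank1 n p (phi : 'cV[C]_n) (X : 'M[C]_(n, p)) :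
  adj phi *m phi = 1%:M ->
  hs_dot (phi *m adj phi *m X) (phi *m adj phi *m X) = (vnorm (adj X *m phi) ^+ 2)%:C%C.
Proof.
move=> /orthoproj_rank1 hP; rewrite hs_dot_orthoproj // vnorm_sqr adjM adjK.
by rewrite mulmxA -mulmxA mxtrace_mulC trace_mx11 mulmxA.
Qed.

Lemma vnorm_adj_le1 n p (phi : 'cV[C]_n) (X : 'M[C]_(n, p)) :
  vnorm phi = 1 -> hs_dot X X = 1 -> vnorm (adj X *m phi) <= 1.
Proof.
move=> /vnorm_eq1 phi1 X1.
rewrite -(expr_le1 (_ : 0 < 2)%N) ?sqrtr_ge0 // -lecR rmorph1 -X1 -hs_dot_rank1 //.
exact/hs_dot_orthoproj_le/orthoproj_rank1.
Qed.

End HilbertSchmidt.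

Lemma cos_acosB (R : realType) (a b : R) : -1 <= a <= 1 -> -1 <= b <= 1 ->
  cos (acos a - acos b) = a * b + Num.sqrt (1 - a ^+ 2) * Num.sqrt (1 - b ^+ 2).
Proof. by move=> ha hb; rewrite cosB !acosK ?in_itv // !sin_acos. Qed.

Theorem theorem5 (R : realType) (n : nat)
  (rho sqrt_rho V W : 'M[complex R]_n) (phi : 'cV[complex R]_n) :
  density rho ->
  is_psd_sqrt sqrt_rho rho ->
  unitary V -> unitary W ->
  vnorm phi = 1 ->
  let F := \tr (adj W *m adj V *m W *m V *m rho) in
  let theta_VW := acos (vnorm (sqrt_rho *m adj (V *m W) *m phi)) in
  let theta_WV := acos (vnorm (sqrt_rho *m adj (W *m V) *m phi)) in
  cmod F <= cos (theta_VW - theta_WV).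
Proof.
move=> [_ tr_rho] [[S_adj _] SS] [VV _] [WW _] phi1 /=.
set S := sqrt_rho; set X := V *m W *m S; set Y := W *m V *m S.
have {}S_adj : adj S = S := S_adj.
have hs1 (U : 'M_n) : adj U *m U = 1%:M -> hs_dot (U *m S) (U *m S) = 1.
  by move=> UU; rewrite hs_dot_isometry // /hs_dot S_adj SS tr_rho.
have X1 : hs_dot X X = 1 by apply/hs1/isometryM.
have Y1 : hs_dot Y Y = 1 by apply/hs1/isometryM.
have -> : \tr (adj W *m adj V *m W *m V *m rho) = hs_dot X Y.
  by rewrite /hs_dot !adjM S_adj -SS -!mulmxA [RHS]mxtrace_mulC !mulmxA.
have adjS U : S *m adj U = adj (U *m S) by rewrite adjM S_adj.
have bnd (Z : 'M_n) : hs_dot Z Z = 1 -> -1 <= vnorm (adj Z *m phi) <= 1.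
  by move=> Z1; rewrite vnorm_adj_le1 // andbT (le_trans _ (sqrtr_ge0 _)) ?lerN10.
rewrite !adjS cos_acosB ?bnd //.
by apply: (hs_dot_orthoproj_split_le (orthoproj_rank1 (vnorm_eq1 phi1)));
  rewrite ?hs_dot_rank1 ?vnorm_eq1 ?sqrtr_ge0.
Qed.
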